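(* Let $n$ be a positive integer and let $\pi\subseteq\mathbb{Z}^2$ be a hexagonal permutation with $n$ dots. Then there exist an integer $i$ with $0\le i\le n-1$ and a translation vector $(a,b)\in\mathbb{Z}^2$ such that every dot of $\pi$ lies in $(a,b)+S_i(n)$, where $$S_i(n)=\{(x,y)\in\mathbb{Z}^2:\ 0\le x\le n-1,\ 0\le y\le n-1,\ -i\le x-y\le n-1-i\}.$$
   Context: Cells of the hexagonal grid are represented by cells $(x,y)\in\mathbb{Z}^2$ of the square grid (cell $(x,y)$ adjacent to $(x\pm1,y)$, $(x,y\pm1)$, $(x+1,y+1)$, $(x-1,y-1)$). The three families of ''rows'' are the rows $\{y=c\}$, the columns $\{x=c\}$ and the standard diagonals $\{x-y=c\}$, $c\in\mathbb{Z}$; lines of the same family are consecutive if their constants differ by $1$. A hexagonal permutation with $n$ dots is a set $\pi$ of $n$ cells such that, for each of the three families, the lines of that family containing a dot of $\pi$ are exactly $n$ consecutive lines, each containing exactly one dot of $\pi$. (Equivalently, $S_i(n)$, $0\le i\le n-1$, are the intersections of an $n\times n$ square with $n$ consecutive standard diagonals each meeting the square.) *)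

From HB Require Import structures.
From mathcomp Require Import all_boot all_order all_algebra.
Set Implicit Arguments. Unset Strict Implicit. Unset Printing Implicit Defensive.
Import Order.TTheory GRing.Theory Num.Theory.
Local Open Scope ring_scope.

Definition cell := (int * int)%type.

Definition row_of (p : cell) : int := p.2.
Definition col_of (p : cell) : int := p.1.
Definition diag_of (p : cell) : int := p.1 - p.2.

Definition family_ok (f : cell -> int) (n : nat) (s : seq cell) : Prop :=
  exists c : int,
    (forall k : int, (exists2 p, p \in s & f p = k) <-> (c <= k < c + n%:Z))
    /\ (forall p q, p \in s -> q \in s -> f p = f q -> p = q).

Definition hex_perm (n : nat) (s : seq cell) : Prop :=
  [/\ uniq s, size s = n,
      family_ok row_of n s, family_ok col_of n s & family_ok diag_of n s].

Definition in_S (i n : nat) (p : cell) : Prop :=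
  [/\ 0 <= p.1 <= n%:Z - 1, 0 <= p.2 <= n%:Z - 1
    & - i%:Z <= p.1 - p.2 <= n%:Z - 1 - i%:Z].

From HB Require Import structures.
From mathcomp Require Import all_boot all_order all_algebra.
From mathcomp Require Import zify.
Set Implicit Arguments. Unset Strict Implicit. Unset Printing Implicit Defensive.
Import Order.TTheory GRing.Theory Num.Theory.
Local Open Scope ring_scope.

(* Let the rows, columns and diagonals of the dots be r..r+n-1, c..c+n-1 and
   d..d+n-1.  Translating by (c, r) puts every dot in the n x n square, and
   the diagonals become -i..n-1-i with i = c - r - d.  The dots on the two
   extreme diagonals d and d+n-1 lie in the square, which forces
   0 <= i <= n-1. *)

Lemma family_ok_range (f : cell -> int) (n : nat) (s : seq cell) :
  family_ok f n s ->
  exists c : int,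
    (forall p, p \in s -> c <= f p < c + n%:Z) /\
    (forall k, c <= k < c + n%:Z -> exists2 p, p \in s & f p = k).
Proof.
move=> [c [Hc _]]; exists c; split=> [p ps | k /Hc //].
by apply/(Hc (f p)); exists p.
Qed.

Section Translation.

Variables (n : nat) (s : seq cell) (r c d : int).
Hypothesis rows_s : forall p, p \in s -> r <= row_of p < r + n%:Z.
Hypothesis cols_s : forall p, p \in s -> c <= col_of p < c + n%:Z.
Hypothesis diags_s : forall p, p \in s -> d <= diag_of p < d + n%:Z.

Lemma diag_offset_ge0 : (exists2 q, q \in s & diag_of q = d + n%:Z - 1) ->
  0 <= c - r - d.
Proof.
move=> [[q1 q2] qs]; rewrite /diag_of /= => qd.
move: (rows_s qs) (cols_s qs); rewrite /row_of /col_of /=; lia.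
Qed.

Lemma diag_offset_lt : (exists2 p, p \in s & diag_of p = d) ->
  c - r - d < n%:Z.
Proof.
move=> [[p1 p2] ps]; rewrite /diag_of /= => pd.
move: (rows_s ps) (cols_s ps); rewrite /row_of /col_of /=; lia.
Qed.

Lemma translate_in_S (i : nat) : i%:Z = c - r - d ->
  forall p, p \in s -> in_S i n (p.1 - c, p.2 - r).
Proof.
move=> i_def [x y] ps; move: (rows_s ps) (cols_s ps) (diags_s ps).
rewrite /row_of /col_of /diag_of /in_S /= => /andP[? ?] /andP[? ?] /andP[? ?].
by split; apply/andP; split; lia.
Qed.

End Translation.

Theorem lemma3 (n : nat) (s : seq cell) :
  (0 < n)%N -> hex_perm n s ->
  exists i : nat, (i <= n - 1)%N /\
  exists a b : int, forall p, p \in s -> in_S i n (p.1 - a, p.2 - b).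
Proof.
move=> n_gt0 [_ _ /family_ok_range[r [rows_s _]]
  /family_ok_range[c [cols_s _]] /family_ok_range[d [diags_s diags_onto]]].
have i_ge0 : 0 <= c - r - d.
  by apply: (diag_offset_ge0 rows_s cols_s); apply: diags_onto; lia.
have i_lt : c - r - d < n%:Z.
  by apply: (diag_offset_lt rows_s cols_s); apply: diags_onto; lia.
have i_def : (`|(c - r - d)%R|%N)%:Z = c - r - d by rewrite gez0_abs.
exists `|(c - r - d)%R|%N; split; first by lia.
by exists c, r; apply: (translate_in_S rows_s cols_s diags_s i_def).
Qed.
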